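(* Edges $e_i$ and $e_j$ that belong to the far case II choose the same representative iff $d(s,t,e_i) = d(s,t,e_j)$. All representatives have different lengths and $|\mathcal{R}|$ equals the number of break points. Let $R,R' \in \mathcal{R}$ be such that $R'$ is the next shorter representative after $R$. We have $d(s,z_{R}) < d(s,z_{R'})$ and all edges represented by $R$ lie on the subpath $P(s,t)[z_R .. z_{R'}]$. There is exactly one break point on $P(s,t)[z_R .. z_{R'}]$, the one corresponding to length $w(R)$.
   Context: Let $G$ be an undirected graph with $n$ vertices and integer edge weights in $[1,M]$, $s$ a fixed source vertex, and $T_s$ a shortest path tree of $G$ rooted at $s$; $P(s,t)$ denotes the $s$-$t$-path in $T_s$, $d(\cdot,\cdot)$ distances in $G$, and $d(s,t,e)$ the length of a shortest $s$-$t$-path in $G-e$ (a replacement path $P(s,t,e)$). Every replacement path is assumed to consist of a common prefix with $P(s,t)$, a detour part that is edge-disjoint from $P(s,t)$, and a common suffix with $P(s,t)$. A set of pivots $D \subseteq V$ is fixed such that every path $P(s,t)$ in $T_s$ contains a pivot among its last $\sqrt{n}$ vertices; for a target $t$, let $x$ be the pivot on $P(s,t)$ closest to $t$. An edge $e$ on $P(s,t)[s..x]$ belongs to the far case II (w.r.t. $t$) if $d(s,t,e) < d(s,x,e) + d(x,t)$, i.e., no replacement path for $e$ uses $x$. Let $e_1, \dots, e_k$ be the far-case-II edges ordered by increasing distance from $s$; then $d(s,t,e_1) \ge \dots \ge d(s,t,e_k)$. Let $u_i$ be the endpoint of $e_i$ closer to $s$; $u_i$ is a break point if $d(s,t,e_i)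 > d(s,t,e_{i+1})$. The edges choose representative replacement paths one after another in the order $e_1, \dots, e_k$: edge $e_i$ first checks whether one of its replacement paths has already been selected by an earlier edge $e_h$, $h<i$; if so it takes that one, otherwise it chooses one of its replacement paths arbitrarily. $\mathcal{R}$ is the set of chosen representatives, and for $R \in \mathcal{R}$, $z_R$ is the first vertex of the detour part of $R$; $w(R)$ is the length of $R$. *)

From mathcomp Require Import all_boot.
From Stdlib Require Import ClassicalEpsilon.
Set Implicit Arguments.
Unset Strict Implicit.
Unset Printing Implicit Defensive.

Definition dec (P : Prop) : bool :=
  if excluded_middle_informative P then true else false.

Lemma decP (P : Prop) : reflect P (dec P).
Proof. by rewrite /dec; case: excluded_middle_informative => h; constructor. Qed.

(* Extended naturals: [None] is +infinity (no path). *)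
Definition olt (a b : option nat) : bool :=
  match a, b with
  | Some m, Some n => m < n
  | Some _, None => true
  | None, _ => false
  end.

Definition oadd (a b : option nat) : option nat :=
  match a, b with
  | Some m, Some n => Some (m + n)
  | _, _ => None
  end.

Section Graph.
Variables (T : finType) (adj : rel T) (w : T -> T -> nat).

Definition simple_weighted_graph (M : nat) : Prop :=
  [/\ forall u v, adj u v = adj v u,
      forall u, ~~ adj u u,
      forall u v, w u v = w v u &
      forall u v, adj u v -> 1 <= w u v <= M].

(* A path/walk is given by its vertex sequence. *)
Definition edges_of (p : seq T) : seq (T * T) := zip p (behead p).

Definition weight (p : seq T) : nat := sumn [seq w e.1 e.2 | e <- edges_of p].

Definition is_walk (u v : T) (p : seq T) : Prop :=
  exists q, [/\ p = u :: q, path adj u q & last u q = v].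

Definition same_edge (e f : T * T) : bool := (f == e) || (f == (e.2, e.1)).

(* walk from u to v in G - F (F a set of forbidden undirected edges) *)
Definition walk_av (F : pred (T * T)) (u v : T) (p : seq T) : Prop :=
  is_walk u v p /\ ~~ has F (edges_of p).

Lemma dist_ex F u v :
  (exists p, walk_av F u v p) ->
  exists n, dec (exists p, walk_av F u v p /\ weight p = n).
Proof. by case=> p hp; exists (weight p); apply/decP; exists p. Qed.

(* length of a shortest u-v path in G - F, None if there is none *)
Definition dist_av (F : pred (T * T)) (u v : T) : option nat :=
  match excluded_middle_informative (exists p, walk_av F u v p) with
  | left H => Some (ex_minn (dist_ex H))
  | right _ => None
  end.

Definition dist (u v : T) : option nat := dist_av (fun _ => false) u v.

Definition dist_e (u v : T) (e : T * T) : option nat := dist_av (same_edge e) u v.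

Definition is_repl (u v : T) (e : T * T) (R : seq T) : Prop :=
  walk_av (same_edge e) u v R /\ dist_e u v e = Some (weight R).

Variables (s : T) (tp : T -> seq T).

(* tp v = P(s,v) : the s-v path in the shortest path tree T_s rooted at s.
   T_s spans the vertices reachable from s; each tree path is a shortest
   path, and tree paths are prefix-closed (so they form a tree). *)
Definition sp_tree : Prop :=
  forall v, dist s v != None ->
    [/\ is_walk s v (tp v), dist s v = Some (weight (tp v)) &
        forall i, i < size (tp v) -> take i.+1 (tp v) = tp (nth s (tp v) i)].

Definition pedge (P : seq T) (j : nat) : T * T := (nth s P j, nth s P j.+1).

Definition csqrt (n : nat) : nat :=
  let r := Nat.sqrt n in if r * r == n then r else r.+1.

Definition pivot_set (D : {set T}) : Prop :=
  forall v, dist s v != None ->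
    has (fun y => y \in D) (drop (size (tp v) - csqrt #|T|) (tp v)).

(* Structural assumption: every replacement path P(s,v,e) for an edge e of
   P(s,v) consists of a common prefix P(s,v)[s..p_i], a detour part
   p_i :: mid ++ [p_k] edge-disjoint from P(s,v), and a common suffix
   P(s,v)[p_k..v]. *)
Definition repl_structure : Prop :=
  forall v, dist s v != None ->
  forall j, j.+1 < size (tp v) ->
  forall R, is_repl s v (pedge (tp v) j) R ->
  exists i k mid,
    [/\ i < size (tp v), k < size (tp v),
        R = take i.+1 (tp v) ++ mid ++ drop k (tp v) &
        ~~ has (fun f => has (same_edge f) (edges_of (tp v)))
               (edges_of (nth s (tp v) i :: rcons mid (nth s (tp v) k)))].

(* first vertex of the detour part of R: the last vertex of the maximal
   common prefix of P and R *)
Fixpoint lcp (p q : seq T) : nat :=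
  match p, q with
  | a :: p', b :: q' => if a == b then (lcp p' q').+1 else 0
  | _, _ => 0
  end.

Definition detour_start (P R : seq T) : T := last s (take (lcp P R) R).

Variables (t : T) (D : {set T}).

Definition pivot : T := last s [seq y <- tp t | y \in D].
Definition pivot_pos : nat := index pivot (tp t).

Definition dst (j : nat) : option nat := dist_e s t (pedge (tp t) j).

Definition far2 (j : nat) : bool :=
  (j < pivot_pos) &&
  olt (dst j) (oadd (dist_e s pivot (pedge (tp t) j)) (dist pivot t)).

Definition far2_list : seq nat := [seq j <- iota 0 pivot_pos | far2 j].

(* u_j (the endpoint of e_j closer to s, at position j of P(s,t)) is a break
   point: d(s,t,e_i) > d(s,t,e_{i+1}) for the next far-case-II edge; by
   convention the last far-case-II edge also yields a break point *)
Definition break_point (j : nat) : bool :=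
  far2 j &&
  (let m := index j far2_list in
   if m.+1 < size far2_list then olt (dst (nth 0 far2_list m.+1)) (dst j)
   else true).

Definition rep_choice (rep : nat -> seq T) : Prop :=
  forall j, far2 j ->
    is_repl s t (pedge (tp t) j) (rep j) /\
    ((exists h, [/\ h < j, far2 h & is_repl s t (pedge (tp t) j) (rep h)]) ->
     exists h, [/\ h < j, far2 h, is_repl s t (pedge (tp t) j) (rep h)
                  & rep j = rep h]).

Definition reps (rep : nat -> seq T) : seq (seq T) :=
  undup [seq rep j | j <- far2_list].

End Graph.

(* A replacement path R for a far-case-II edge e_j of P(s,t) avoids the pivot
   x (otherwise d(s,t,e_j) >= d(s,x,e_j) + d(x,t)), so its detour leaves P(s,t)
   at z_R = P[i] with i <= j and rejoins it strictly after x.  Hence R avoids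
   every edge of P(s,t) between z_R and x: d(s,t,e) is nonincreasing along the
   far-case-II edges, and a representative chosen for e_i is still a
   replacement path for every later e_j with d(s,t,e_j) = d(s,t,e_i), so the
   sequential choice propagates it (induction on j).  Representatives thus
   correspond to the values of d(s,t,.), i.e. to break points.  If R' is the
   next shorter representative, every edge represented by R lies before
   z_{R'}, since R' avoids all edges from z_{R'} on and is shorter. *)

From Pilot Require Import Defs.
From mathcomp Require Import all_boot zify.
From Stdlib Require Import ClassicalEpsilon.
Set Implicit Arguments.
Unset Strict Implicit.
Unset Printing Implicit Defensive.

Section Walks.
Variables (T : finType) (adj : rel T) (w : T -> T -> nat).

Lemma edges_of_cat (p q : seq T) y :
  edges_of (p ++ y :: q) = edges_of (rcons p y) ++ edges_of (y :: q).
Proof. by elim: p => [//|a [|b p] IH] //=; rewrite -IH. Qed.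

Lemma weight_cat (p q : seq T) y :
  weight w (p ++ y :: q) = weight w (rcons p y) + weight w (y :: q).
Proof. by rewrite /weight edges_of_cat map_cat sumn_cat. Qed.

Lemma weight_rcons2 (p : seq T) y z :
  weight w (rcons (rcons p y) z) = weight w (rcons p y) + w y z.
Proof.
have -> : rcons (rcons p y) z = p ++ y :: [:: z] by rewrite -!cats1 -catA.
by rewrite weight_cat /weight /= addn0.
Qed.

Lemma is_walk_cat u v (p q : seq T) y :
  is_walk adj u v (p ++ y :: q) ->
  is_walk adj u y (rcons p y) /\ is_walk adj y v (y :: q).
Proof.
case=> r [+ hpath hlast]; case: p => [|a p] /= [eu er]; subst u r.
  by split; [exists [::] | exists q].
move: hpath; rewrite cat_path /= => /and3P [h1 h2 h3].
split; first by exists (rcons p y); rewrite rcons_path h1 h2 last_rcons.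
by exists q; rewrite last_cat in hlast.
Qed.

Lemma dist_av_le F u v p : walk_av adj F u v p ->
  exists2 n, dist_av adj w F u v = Some n & n <= weight w p.
Proof.
move=> hp; rewrite /dist_av; case: excluded_middle_informative => [H|[]]; last by exists p.
exists (ex_minn (dist_ex w H)) => //; case: ex_minnP => m _; apply.
rewrite /dec; case: excluded_middle_informative => // [[]]; by exists p.
Qed.

Lemma walk_av_none u v p : is_walk adj u v p -> walk_av adj (fun _ => false) u v p.
Proof. by split=> //; elim: (edges_of p). Qed.

Lemma mem_edges_ofP x0 (p : seq T) f :
  reflect (exists2 a, a.+1 < size p & f = (nth x0 p a, nth x0 p a.+1))
          (f \in edges_of p).
Proof.
elim: p => [|a [|b p] IH]; try by constructor; case.
have -> : edges_of [:: a, b & p] = (a, b) :: edges_of (b :: p) by [].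
rewrite in_cons; apply: (iffP orP).
  by case=> [/eqP ->|/IH [c hc ->]]; [exists 0 | exists c.+1].
by case=> [[|c] hc ef]; [left; rewrite ef | right; apply/IH; exists c].
Qed.

End Walks.

Lemma lcp_cat (T : finType) (p q r : seq T) : lcp (p ++ q) (p ++ r) = size p + lcp q r.
Proof. by elim: p => //= x p ->; rewrite eqxx. Qed.

Lemma same_edgeC (T : finType) (e f : T * T) : same_edge e f = same_edge f e.
Proof.
rewrite /same_edge; case: e f => a b [c d] /=.
by apply/idP/idP => /orP [] /eqP [-> ->]; rewrite eqxx ?orbT.
Qed.

Definition edge_disjoint (T : finType) (E F : seq (T * T)) : bool :=
  ~~ has (fun f => has (same_edge f) F) E.

Section Splice.
Variables (T : finType) (s : T) (P : seq T).

Lemma pedge_inj a b : uniq P -> a.+1 < size P -> b.+1 < size P ->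
  same_edge (pedge s P a) (pedge s P b) -> a = b.
Proof.
move=> uP ha hb; have ha' := ltnW ha; have hb' := ltnW hb.
rewrite /same_edge /pedge !xpair_eqE !nth_uniq //.
by case/orP => /andP [/eqP e1 /eqP e2]; lia.
Qed.

Lemma pedge_in_edges a : a.+1 < size P -> pedge s P a \in edges_of P.
Proof. by move=> ha; apply/(mem_edges_ofP s); exists a. Qed.

Definition splice i mid k : seq T := take i.+1 P ++ mid ++ drop k P.
Definition detour i mid k : seq T := nth s P i :: rcons mid (nth s P k).

Lemma edges_of_splice i mid k : i < size P -> k < size P -> edges_of (splice i mid k) =
  edges_of (take i.+1 P) ++ edges_of (detour i mid k) ++ edges_of (drop k P).
Proof.
move=> hi hk; rewrite /splice (take_nth s hi) cat_rcons edges_of_cat -(take_nth s hi).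
by rewrite (drop_nth s hk) -cat_cons edges_of_cat.
Qed.

Lemma detour_not_pedge i mid k f m :
  edge_disjoint (edges_of (detour i mid k)) (edges_of P) ->
  f \in edges_of (detour i mid k) -> m.+1 < size P -> ~~ same_edge (pedge s P m) f.
Proof.
move=> hdis hf hm; rewrite same_edgeC; apply: contra (hasPn hdis f hf) => hfm.
by apply/hasP; exists (pedge s P m); first exact: pedge_in_edges.
Qed.

Lemma detour_start_splice i mid k : i < size P -> k < size P ->
  edge_disjoint (edges_of (detour i mid k)) (edges_of P) ->
  detour_start s P (splice i mid k) = nth s P i.
Proof.
move=> hi hk hdis; have lcpE : lcp P (splice i mid k) = i.+1.
  rewrite -{1}(cat_take_drop i.+1 P) lcp_cat size_takel //.
  case: (ltnP i.+1 (size P)) => hi1; last by rewrite drop_oversize ?addn0.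
  rewrite (drop_nth s hi1) -[RHS]addn0; congr addn.
  have hne : (nth s P i, nth s P i.+1) \notin edges_of (detour i mid k).
    by apply/negP => /(detour_not_pedge hdis) /(_ hi1); rewrite /same_edge /pedge eqxx.
  rewrite /detour in hne; case: mid hne {hdis} => [|y m] /= hne.
    by rewrite (drop_nth s hk) /=; case: eqP hne => // ->; rewrite mem_head.
  by case: eqP hne => // ->; rewrite mem_head.
by rewrite /detour_start lcpE /splice take_size_cat ?size_takel // (take_nth s hi) last_rcons.
Qed.

Lemma splice_avoids_pedge i mid k m : uniq P -> k < size P ->
  edge_disjoint (edges_of (detour i mid k)) (edges_of P) -> i <= m -> m.+1 < k ->
  ~~ has (same_edge (pedge s P m)) (edges_of (splice i mid k)).
Proof.
move=> uP hk hdis him hmk; have hm : m.+1 < size P by apply: ltn_trans hk.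
have hi : i < size P by apply: leq_ltn_trans him (ltnW hm).
rewrite edges_of_splice // !has_cat !negb_or; apply/and3P; split.
- apply/hasPn => f /(mem_edges_ofP s) [a]; rewrite size_takel // => ha ->.
  rewrite !nth_take //; last exact: ltnW.
  by apply/negP => /(pedge_inj uP hm) eam; lia.
- by apply/hasPn => f hf; apply: detour_not_pedge hdis hf hm.
- apply/hasPn => f /(mem_edges_ofP s) [a]; rewrite size_drop => ha ->.
  by rewrite !nth_drop addnS; apply/negP => /(pedge_inj uP hm) eam; lia.
Qed.

Lemma splice_has_pedge i mid k m : i < size P -> k < size P -> m < i ->
  has (same_edge (pedge s P m)) (edges_of (splice i mid k)).
Proof.
move=> hi hk hmi; rewrite edges_of_splice // has_cat; apply/orP; left.
apply/hasP; exists (pedge s P m); last by rewrite /same_edge eqxx.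
apply/(mem_edges_ofP s); exists m; first by rewrite size_takel.
by rewrite /pedge !nth_take // ltnW.
Qed.

Lemma splice_skips i mid k y : k < size P -> y \in P -> y \notin splice i mid k ->
  i < index y P < k.
Proof.
move=> hk yP; rewrite /splice !mem_cat negb_or => /andP [yt /norP [_ yd]].
rewrite in_take // -leqNgt in yt; rewrite yt /=.
move: yP; rewrite -{1}(cat_take_drop k P) mem_cat (negbTE yd) orbF.
by rewrite in_take_leq ?(ltnW hk).
Qed.

End Splice.

Section TreePath.
Variables (T : finType) (adj : rel T) (w : T -> T -> nat) (s : T) (tp : T -> seq T).
Variable v : T.
Hypotheses (hT : sp_tree adj w s tp) (hv : dist adj w s v != None).

Local Notation P := (tp v).

Lemma tree_path_walk : is_walk adj s v P.
Proof. by case: (hT hv). Qed.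

Lemma tree_path_prefix i : i < size P -> take i.+1 P = tp (nth s P i).
Proof. by case: (hT hv) => _ _; apply. Qed.

Lemma tree_path_uniq : uniq P.
Proof.
apply/(uniqP s) => a b ha hb eab.
have := tree_path_prefix ha; rewrite eab -tree_path_prefix // => /(congr1 size).
by rewrite !size_takel // => -[].
Qed.

Lemma dist_tree_path i : i < size P ->
  dist adj w s (nth s P i) = Some (weight w (take i.+1 P)).
Proof.
move=> hi; have hw : is_walk adj s (nth s P i) (take i.+1 P).
  rewrite (take_nth s hi); have := tree_path_walk.
  by rewrite -{1}(cat_take_drop i P) (drop_nth s hi) => /is_walk_cat [].
have [n hn _] := dist_av_le w (walk_av_none hw).
have hi_reach : dist adj w s (nth s P i) != None by rewrite /dist hn.
by case: (hT hi_reach) => _ -> _; rewrite -tree_path_prefix.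
Qed.

Variable M : nat.
Hypothesis hG : simple_weighted_graph adj w M.

Lemma weight_take_lt a b : a < b -> b < size P ->
  weight w (take a.+1 P) < weight w (take b.+1 P).
Proof.
have step n : n.+1 < size P -> weight w (take n.+1 P) < weight w (take n.+2 P).
  move=> hn; rewrite (take_nth s hn) (take_nth s (ltnW hn)) weight_rcons2.
  rewrite -(take_nth s (ltnW hn)) -addn1 leq_add2l.
  have hadj : adj (nth s P n) (nth s P n.+1).
    case: tree_path_walk => q [eP hq _]; move: hn; rewrite eP => hn.
    exact: (pathP s hq n hn).
  by have [_ _ _ /(_ _ _ hadj) /andP []] := hG.
elim: b => // b IH; rewrite ltnS leq_eqVlt => /orP [/eqP -> | hab] hb; first exact: step.
exact: ltn_trans (IH hab (ltnW hb)) (step _ hb).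
Qed.

End TreePath.

Section SortedNext.
Variables (L : seq nat) (j : nat).
Hypotheses (sL : sorted ltn L) (jL : j \in L).

Lemma sorted_lt_next : (index j L).+1 < size L -> j < nth 0 L (index j L).+1.
Proof.
by move=> hsz; rewrite -{1}(nth_index 0 jL) (sorted_ltn_nth ltn_trans) ?inE ?index_mem.
Qed.

Lemma sorted_next_le y : y \in L -> j < y ->
  (index j L).+1 < size L /\ nth 0 L (index j L).+1 <= y.
Proof.
move=> yL jy; have sL' := sub_sorted (@ltnW) sL.
have ijy : index j L < index y L.
  rewrite ltnNge; apply: contraL jy => yj; rewrite -leqNgt.
  exact: (sorted_leq_index leq_trans leqnn sL').
have hsz : (index j L).+1 < size L by rewrite (leq_ltn_trans ijy) ?index_mem.
split=> //; rewrite -{1}(nth_index 0 yL).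
by apply: (sorted_leq_nth leq_trans leqnn 0 sL'); rewrite ?inE ?index_mem.
Qed.

End SortedNext.

Section FarCaseII.
Variables (T : finType) (adj : rel T) (w : T -> T -> nat) (s t : T) (tp : T -> seq T).
Variables (D : {set T}) (rep : nat -> seq T).
Hypotheses (hT : sp_tree adj w s tp) (hRS : repl_structure adj w s tp)
  (ht : dist adj w s t != None) (hrep : rep_choice adj w s tp t D rep).

Local Notation P := (tp t).
Local Notation x := (pivot s tp t D).
Local Notation px := (pivot_pos s tp t D).
Local Notation far2 := (far2 adj w s tp t D).
Local Notation dst := (dst adj w s tp t).
Local Notation pe := (pedge s (tp t)).
Local Notation break_point := (break_point adj w s tp t D).
Local Notation reps := (reps adj w s tp t D rep).

(* [dst j] is finite for every far-case-II edge (see [far2_dst]), so the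
   default value 0 is never observed. *)
Definition dstn j := odflt 0 (dst j).

Definition detour_index R := index (detour_start s P R) P.

Lemma pivot_in_path : x \in P.
Proof.
rewrite /pivot; have := mem_last s [seq y <- P | y \in D].
rewrite in_cons mem_filter => /orP [/eqP -> | /andP [] //].
by case: (tree_path_walk hT ht) => q [-> _ _]; rewrite mem_head.
Qed.

Lemma far2_dst j : far2 j -> dst j = Some (dstn j).
Proof. by case/andP => _; rewrite /dstn; case: (dst j). Qed.

Lemma far2_lt_pivot j : far2 j -> j < px.
Proof. by case/andP. Qed.

Lemma far2_edge j : far2 j -> j.+1 < size P.
Proof. by move/far2_lt_pivot/leq_ltn_trans; apply; rewrite index_mem pivot_in_path. Qed.

Lemma repl_weight j R : far2 j -> is_repl adj w s t (pe j) R -> weight w R = dstn j.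
Proof. by move/far2_dst => + [_ hR]; rewrite /Defs.dst hR => -[]. Qed.

Lemma dstn_le_avoiding j R : far2 j -> walk_av adj (same_edge (pe j)) s t R ->
  dstn j <= weight w R.
Proof.
move/far2_dst => + /(dist_av_le w) [n hn].
by rewrite /Defs.dst /dist_e hn => -[->].
Qed.

Lemma pivot_notin_repl j R : far2 j -> is_repl adj w s t (pe j) R -> x \notin R.
Proof.
case/andP=> _ + [[hw hav] hR]; apply: contraL => xR.
case/splitPr: xR hw hav hR => R1 R2 hw hav hR; have [hw1 hw2] := is_walk_cat hw.
move: hav; rewrite edges_of_cat has_cat negb_or => /andP [hav1 _].
have [n1 e1 hn1] := dist_av_le w (conj hw1 hav1).
have [n2 e2 hn2] := dist_av_le w (walk_av_none hw2).
by rewrite /Defs.dst hR /dist_e e1 /dist e2 weight_cat /= -leqNgt leq_add.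
Qed.

Lemma repl_detour j R : far2 j -> is_repl adj w s t (pe j) R ->
  [/\ detour_index R <= j, nth s P (detour_index R) = detour_start s P R &
      forall m, detour_index R <= m -> m < px -> walk_av adj (same_edge (pe m)) s t R].
Proof.
move=> hj hR; have uP := tree_path_uniq hT ht.
have [i [k [mid [hi hk eR hdis]]]] := hRS ht (far2_edge hj) hR.
have {}eR : R = splice P i mid k := eR.
have /andP [_ hxk] : i < px < k.
  by rewrite (splice_skips (mid := mid) hk pivot_in_path) // -eR (pivot_notin_repl hj hR).
have hz : detour_start s P R = nth s P i by rewrite eR (detour_start_splice hi hk hdis).
have -> : detour_index R = i by rewrite /detour_index hz index_uniq.
case: hR => [[hw hav] _]; split=> //.
  by rewrite leqNgt; apply: contra hav => hji; rewrite eR (splice_has_pedge _ _ hi hk).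
move=> m him hmx; split=> //.
by rewrite eR (splice_avoids_pedge uP hk hdis him) // (leq_ltn_trans hmx).
Qed.

Lemma rep_repl j : far2 j -> is_repl adj w s t (pe j) (rep j).
Proof. by case/hrep. Qed.

Lemma rep_weight j : far2 j -> weight w (rep j) = dstn j.
Proof. by move=> hj; apply: repl_weight hj (rep_repl hj). Qed.

Lemma dstn_le_after_detour j m : far2 j -> far2 m -> detour_index (rep j) <= m ->
  dstn m <= dstn j.
Proof.
move=> hj hm hjm; have [_ _ hav] := repl_detour hj (rep_repl hj).
by rewrite -(rep_weight hj); apply: dstn_le_avoiding hm (hav _ hjm (far2_lt_pivot hm)).
Qed.

Lemma dstn_nonincreasing j m : far2 j -> far2 m -> j <= m -> dstn m <= dstn j.
Proof.
move=> hj hm hjm; apply: dstn_le_after_detour => //.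
by have [hz _ _] := repl_detour hj (rep_repl hj); apply: leq_trans hz hjm.
Qed.

Lemma rep_repl_later i j : far2 i -> far2 j -> i <= j -> dstn i = dstn j ->
  is_repl adj w s t (pe j) (rep i).
Proof.
move=> hi hj hij eij; have [hz _ hav] := repl_detour hi (rep_repl hi).
split; first by apply: hav (leq_trans hz hij) (far2_lt_pivot hj).
by rewrite -/(Defs.dst _ _ _ _ _ _) far2_dst // rep_weight // eij.
Qed.

Lemma rep_eq_of_dstn_eq i j : far2 i -> far2 j -> dstn i = dstn j -> rep i = rep j.
Proof.
wlog lt_ij : i j / i < j.
  move=> H hi hj eij; case: (ltngtP i j) => [lt_ij | lt_ji | -> //]; first exact: H.
  by symmetry; apply: H.
elim/ltn_ind: j i lt_ij => j IH i lt_ij hi hj eij.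
(* [rep i] is a replacement path for e_j, so e_j reuses some earlier [rep h]. *)
have earlier := And3 lt_ij hi (rep_repl_later hi hj (ltnW lt_ij) eij).
have [_ /(_ (ex_intro _ i earlier)) [h [lt_hj hh hRh ->]]] := hrep hj.
have ehj : dstn h = dstn j by rewrite -(rep_weight hh) (repl_weight hj hRh).
case: (ltngtP i h) => [lt_ih | lt_hi | -> //].
  by apply: (IH h lt_hj i lt_ih hi hh); rewrite eij ehj.
by symmetry; apply: (IH i lt_ij h lt_hi hh hi); rewrite eij ehj.
Qed.

Lemma rep_eq_iff_dst i j : far2 i -> far2 j -> rep i = rep j <-> dst i = dst j.
Proof.
move=> hi hj; rewrite (far2_dst hi) (far2_dst hj); split=> [eR | [eij]].
  by rewrite -(rep_weight hi) -(rep_weight hj) eR.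
exact: rep_eq_of_dstn_eq.
Qed.

Lemma mem_far2_list j : (j \in far2_list adj w s tp t D) = far2 j.
Proof.
rewrite mem_filter mem_iota add0n andbC; apply: andb_idl.
exact: far2_lt_pivot.
Qed.

Lemma mem_repsP R : reflect (exists2 a, far2 a & R = rep a) (R \in reps).
Proof.
rewrite mem_undup; apply: (iffP mapP) => [[a] | [a ha ->]].
  by rewrite mem_far2_list => ha ->; exists a.
by exists a; rewrite ?mem_far2_list.
Qed.

Lemma break_pointP j : far2 j ->
  break_point j <-> forall y, far2 y -> j < y -> dstn y != dstn j.
Proof.
move=> hj; rewrite /Defs.break_point hj /=.
set L := far2_list adj w s tp t D.
have sL : sorted ltn L by apply: sorted_filter; [exact: ltn_trans | exact: iota_ltn_sorted].
have jL : j \in L by rewrite mem_far2_list.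
case: ifP => hsz; last first.
  split=> // _ y hy jy; rewrite -mem_far2_list in hy.
  by have [hsz' _] := sorted_next_le sL jL hy jy; rewrite hsz' in hsz.
set n := nth 0 L _; have hn : far2 n by rewrite -mem_far2_list mem_nth.
have jn : j < n := sorted_lt_next sL jL hsz.
rewrite (far2_dst hn) (far2_dst hj) /=; split=> [lt_nj y hy jy | H].
  have [_ ny] := sorted_next_le sL jL (etrans (mem_far2_list y) hy) jy.
  by rewrite neq_ltn (leq_ltn_trans (dstn_nonincreasing hn hy ny) lt_nj).
by rewrite ltn_neqAle H // dstn_nonincreasing // ltnW.
Qed.

Lemma last_edge_of_dstn a : far2 a -> exists j,
  [/\ far2 j, dstn j = dstn a, break_point j & forall y, far2 y -> dstn y = dstn a -> y <= j].
Proof.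
move=> ha; have ex : exists y, far2 y && (dstn y == dstn a) by exists a; rewrite ha eqxx.
have ub y : far2 y && (dstn y == dstn a) -> y <= px.
  by case/andP => /far2_lt_pivot /ltnW.
case: (ex_maxnP ex ub) => j /andP [hj /eqP eja] jmax.
have jmax' y : far2 y -> dstn y = dstn a -> y <= j.
  by move=> hy eya; apply: jmax; rewrite hy eya eqxx.
exists j; split=> //; apply/(break_pointP hj) => y hy jy; rewrite eja.
by apply: contraL jy => /eqP /(jmax' y hy); rewrite leqNgt.
Qed.

Lemma reps_weight_inj : {in reps &, forall R R', weight w R = weight w R' -> R = R'}.
Proof.
move=> _ _ /mem_repsP [a ha ->] /mem_repsP [b hb ->].
by rewrite !rep_weight //; apply: rep_eq_of_dstn_eq.
Qed.

Lemma size_reps : size reps = count break_point (iota 0 px).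
Proof.
rewrite -size_filter; set BP := filter _ _.
have memBP j : (j \in BP) = break_point j.
  rewrite mem_filter mem_iota add0n andbC; apply: andb_idl.
  by case/andP => /far2_lt_pivot.
have rep_inj : {in BP &, injective rep}.
  move=> i j; rewrite !memBP => bi bj eij.
  have hi := proj1 (andP bi); have hj := proj1 (andP bj).
  move/(rep_eq_iff_dst hi hj): eij; rewrite (far2_dst hi) (far2_dst hj) => -[eij].
  case: (ltngtP i j) => [lt_ij | lt_ji | //].
    by have /eqP[] := (break_pointP hi).1 bi j hj lt_ij.
  by have /eqP[] := (break_pointP hj).1 bj i hi lt_ji.
rewrite -(size_map rep); apply/perm_size/uniq_perm.
- exact: undup_uniq.
- by rewrite map_inj_in_uniq // filter_uniq // iota_uniq.
move=> R; apply/mem_repsP/mapP => [[a ha ->] | [j]].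
  have [j [hj eja bj _]] := last_edge_of_dstn ha.
  by exists j; rewrite ?memBP // (rep_eq_of_dstn_eq ha hj).
by rewrite memBP => /andP [hj _] ->; exists j.
Qed.

Lemma detour_index_rep_le j : far2 j -> detour_index (rep j) <= j.
Proof. by move=> hj; case: (repl_detour hj (rep_repl hj)). Qed.

Section NextRepresentative.
Variables a b : nat.
Hypotheses (ha : far2 a) (hb : far2 b) (lt_ba : dstn b < dstn a)
  (hnext : forall c, far2 c -> ~ (dstn b < dstn c < dstn a)).

Lemma rep_edges_between j : far2 j -> dstn j = dstn a ->
  detour_index (rep a) <= j < detour_index (rep b).
Proof.
move=> hj eja; rewrite -(rep_eq_of_dstn_eq hj ha eja) detour_index_rep_le //=.
rewrite ltnNge; apply: contraL lt_ba => /(dstn_le_after_detour hb hj).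
by rewrite eja -leqNgt.
Qed.

Lemma break_point_between j : break_point j ->
  detour_index (rep a) <= j < detour_index (rep b) -> dstn j = dstn a.
Proof.
move=> bj /andP [aj jb]; have hj := proj1 (andP bj).
case: (ltngtP (dstn j) (dstn a)) => [lt_ja | lt_aj | //]; last first.
  by move: (dstn_le_after_detour ha hj aj); rewrite leqNgt lt_aj.
exfalso; move: jb; apply/negP; rewrite -leqNgt.
case: (ltngtP (dstn j) (dstn b)) => [lt_jb | lt_bj | ejb].
- have lt_bj : b < j.
    by rewrite ltnNge; apply: contraL lt_jb => /(dstn_nonincreasing hj hb); rewrite -leqNgt.
  exact: leq_trans (detour_index_rep_le hb) (ltnW lt_bj).
- by case: (hnext hj); rewrite lt_bj.
- by rewrite (rep_eq_of_dstn_eq hb hj (esym ejb)) detour_index_rep_le.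
Qed.

Lemma break_points_between : exists j0,
  [seq j <- iota 0 px | break_point j && (detour_index (rep a) <= j)
                                      && (j.+1 <= detour_index (rep b))] = [:: j0]
  /\ dst j0 = Some (dstn a).
Proof.
have [j0 [hj0 ej0 bj0 j0max]] := last_edge_of_dstn ha.
exists j0; split; last by rewrite far2_dst // ej0.
rewrite -(filter_pred1_uniq (iota_uniq 0 px)) ?mem_iota ?far2_lt_pivot //.
apply: eq_in_filter => j _ /=; apply/idP/eqP => [/andP [/andP [bj aj] jb] | ->].
  have hj := proj1 (andP bj); have eja := break_point_between bj (introT andP (conj aj jb)).
  apply/eqP; rewrite eqn_leq j0max //= leqNgt; apply/negP => lt_jj0.
  by have /eqP[] := (break_pointP hj).1 bj j0 hj0 lt_jj0; rewrite ej0 eja.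
by rewrite bj0 /=; apply: rep_edges_between.
Qed.

Variable M : nat.
Hypothesis hG : simple_weighted_graph adj w M.

Lemma dist_detour_start_lt :
  olt (dist adj w s (detour_start s P (rep a))) (dist adj w s (detour_start s P (rep b))).
Proof.
have [_ za _] := repl_detour ha (rep_repl ha); have [_ zb _] := repl_detour hb (rep_repl hb).
have zb_lt : detour_index (rep b) < size P.
  exact: leq_ltn_trans (detour_index_rep_le hb) (ltnW (far2_edge hb)).
have /andP [za_a lt_ab] := rep_edges_between ha erefl.
have lt_z := leq_ltn_trans za_a lt_ab.
rewrite -za -zb !(dist_tree_path hT ht) ?(ltn_trans lt_z) //=.
exact: (weight_take_lt hT ht hG lt_z zb_lt).
Qed.

End NextRepresentative.

End FarCaseII.

Theorem lemma7 (T : finType) (adj : rel T) (w : T -> T -> nat) (M : nat)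
  (s t : T) (tp : T -> seq T) (D : {set T}) (rep : nat -> seq T) :
  simple_weighted_graph adj w M ->
  sp_tree adj w s tp ->
  pivot_set adj w s tp D ->
  repl_structure adj w s tp ->
  dist adj w s t != None ->
  rep_choice adj w s tp t D rep ->
  let P := tp t in
  let RR := reps adj w s tp t D rep in
  [/\ (* e_i, e_j choose the same representative iff d(s,t,e_i) = d(s,t,e_j) *)
      forall i j, far2 adj w s tp t D i -> far2 adj w s tp t D j ->
        (rep i = rep j <-> dst adj w s tp t i = dst adj w s tp t j),
      (* all representatives have different lengths *)
      {in RR &, forall R R', weight w R = weight w R' -> R = R'},
      (* |R| = number of break points *)
      size RR = count (break_point adj w s tp t D) (iota 0 (pivot_pos s tp t D)) &
      (* R' is the next shorter representative after R *)
      forall R R', R \in RR -> R' \in RR -> weight w R' < weight w R ->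
        (forall R'', R'' \in RR ->
           ~ (weight w R' < weight w R'' /\ weight w R'' < weight w R)) ->
        let zR := detour_start s P R in
        let zR' := detour_start s P R' in
        [/\ olt (dist adj w s zR) (dist adj w s zR'),
            (* every edge represented by R lies on P(s,t)[zR..zR'] *)
            (forall j, far2 adj w s tp t D j -> rep j = R ->
               index zR P <= j /\ j.+1 <= index zR' P) &
            (* exactly one break point (edge) on P(s,t)[zR..zR'], namely the
               one with d(s,t,e_j) = w(R) *)
            exists j0,
              [seq j <- iota 0 (pivot_pos s tp t D)
                 | break_point adj w s tp t D j
                   && (index zR P <= j) && (j.+1 <= index zR' P)] = [:: j0]
              /\ dst adj w s tp t j0 = Some (weight w R)]].
Proof.
move=> hG hT _ hRS ht hrep /=; split.
- exact: rep_eq_iff_dst.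
- exact: reps_weight_inj.
- exact: size_reps.
move=> _ _ /mem_repsP [a ha ->] /mem_repsP [b hb ->].
rewrite !(rep_weight hrep) // => lt_ba hnext /=.
have hnext' c : far2 adj w s tp t D c ->
    ~ (dstn adj w s t tp b < dstn adj w s t tp c < dstn adj w s t tp a).
  by move=> hc /andP; rewrite -(rep_weight hrep hc); apply/hnext/mem_repsP; exists c.
split.
- exact: (dist_detour_start_lt hT hRS ht hrep ha hb lt_ba hG).
- move=> j hj /(rep_eq_iff_dst hT hRS ht hrep hj ha).
  rewrite (far2_dst hj) (far2_dst ha) => -[eja].
  exact/andP/(rep_edges_between hT hRS ht hrep ha hb lt_ba hj eja).
- exact: (break_points_between hT hRS ht hrep ha hb lt_ba hnext').
Qed.
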